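(* Consider stochastic momentum gradient descent on a 2-layer diagonal linear network as described in the context, and assume that the iterates $(u_k,v_k)$ converge to $(u_\infty,v_\infty)$, that $\Delta_\infty=|u_\infty^2-v_\infty^2|$ has nonzero coordinates, and that no coordinate of $w_{\pm,k}$ is ever exactly zero. Then the two series $$S_\pm=\frac{1}{1-\beta}\sum_{k=1}^\infty\Big[r\Big(\frac{w_{\pm,k+1}}{w_{\pm,k}}\Big)+\beta\,r\Big(\frac{w_{\pm,k}}{w_{\pm,k+1}}\Big)\Big]$$ converge to finite vectors, where $r(z)=(z-1)-\ln|z|$ for $z\neq0$ (applied coordinate-wise).
   Context: Data $x_1,\dots,x_n\in\mathbb{R}^d$, $y\in\mathbb{R}^n$. For a batch $\mathcal{B}\subset[n]$ of size $B$, $L_{\mathcal B}(\theta)=\frac{1}{2B}\sum_{i\in\mathcal B}(y_i-\langle x_i,\theta\rangle)^2$. Vector operations are coordinate-wise. Stochastic momentum gradient descent with step size $\gamma>0$, momentum $\beta\in[0,1)$ and batches $\mathcal{B}_k\subset[n]$ of size $B\in[n]$ (sampled with or without replacement): $u_{k+1}=u_k-\gamma\nabla L_{\mathcal B_k}(\theta_k)\odot v_k+\beta(u_k-u_{k-1})$, $v_{k+1}=v_k-\gamma\nabla L_{\mathcal B_k}(\theta_k)\odot u_k+\beta(v_k-v_{k-1})$, $\theta_k=u_k\odot v_k$, initialised with $u_1=u_0$, $v_1=v_0$. $w_{\pm,k}=u_k\pm v_k$, $\Delta_k=|u_k^2-v_k^2|$. *)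

From Stdlib Require Import Reals Lra List.
From Coquelicot Require Import Coquelicot.
Open Scope R_scope.

(* Vectors in R^d are represented as functions nat -> R; only coordinates
   j < d are meaningful.  Samples: x i j is coordinate j of x_i (i < n). *)
Definition vec := nat -> R.

Fixpoint sumk (f : nat -> R) (m : nat) : R :=
  match m with
  | O => 0
  | S m' => sumk f m' + f m'
  end.

Definition inner (d : nat) (a b : vec) : R := sumk (fun j => a j * b j) d.

(* sum over the elements of a batch (a list of indices; repetitions allowed,
   which covers sampling with replacement) *)
Definition sum_list (f : nat -> R) (l : list nat) : R :=
  fold_right (fun i acc => f i + acc) 0 l.

Definition batch_loss (d : nat) (x : nat -> vec) (y : nat -> R)
  (Bt : list nat) (theta : vec) : R :=
  / (2 * INR (length Bt)) *
  sum_list (fun i => (y i - inner d (x i) theta) ^ 2) Bt.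

Definition batch_grad (d : nat) (x : nat -> vec) (y : nat -> R)
  (Bt : list nat) (theta : vec) : vec :=
  fun j => - (/ INR (length Bt)) *
           sum_list (fun i => (y i - inner d (x i) theta) * x i j) Bt.

Definition rfun (z : R) : R := (z - 1) - ln (Rabs z).

(** With [w+ = u + v] and [w- = u - v], a coordinate of the momentum recursion reads
    [w+_{k+1} = w+_k - g_k w+_k + beta (w+_k - w+_{k-1})] and
    [w-_{k+1} = w-_k + g_k w-_k + beta (w-_k - w-_{k-1})] with the same [g_k].
    The gradient term therefore cancels in the sum of the [w+] and [w-] summands of
    [S_+] and [S_-], which telescopes to the potential
    [beta/(1-beta) (w+_{k-1}/w+_k + w-_{k-1}/w-_k) - ln|w+_k| - ln|w-_k|]; this
    potential converges because [w+] and [w-] have nonzero limits.  Both summands are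
    eventually nonnegative, since consecutive ratios are eventually positive and
    [r >= 0] on positive reals, so each of the two series converges separately. *)
From Stdlib Require Import Reals Lra Lia List.
From Coquelicot Require Import Coquelicot.
Open Scope R_scope.

Lemma rfun_ge0 z : 0 < z -> 0 <= rfun z.
Proof.
  intro Hz. unfold rfun. rewrite Rabs_pos_eq by lra.
  pose proof (exp_ineq1_le (ln z)) as Hexp. rewrite exp_ln in Hexp by lra. lra.
Qed.

Lemma ln_Rabs_div p q : p <> 0 -> q <> 0 ->
  ln (Rabs (p / q)) = ln (Rabs p) - ln (Rabs q).
Proof.
  intros Hp Hq. rewrite Rabs_div by exact Hq.
  apply ln_div; apply Rabs_pos_lt; assumption.
Qed.

Lemma Rdiv_pos_same_sign p q c : 0 < p * c -> 0 < q * c -> 0 < p / q.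
Proof.
  intros Hp Hq.
  assert (Hc : c <> 0) by (intros ->; lra).
  assert (Hq0 : q <> 0) by (intros ->; lra).
  replace (p / q) with ((p * c) / (q * c)) by (field; split; assumption).
  apply Rdiv_lt_0_compat; assumption.
Qed.

Lemma is_lim_seq_ln_Rabs (a : nat -> R) A : A <> 0 -> is_lim_seq a A ->
  is_lim_seq (fun k => ln (Rabs (a k))) (ln (Rabs A)).
Proof.
  intros HA Ha. apply is_lim_seq_continuous.
  - apply continuity_pt_filterlim, continuous_ln, Rabs_pos_lt, HA.
  - exact (is_lim_seq_abs a A Ha).
Qed.

Lemma is_lim_seq_eventually_same_sign (a : nat -> R) A : A <> 0 -> is_lim_seq a A ->
  exists N, forall m, (N <= m)%nat -> 0 < a m * A.
Proof.
  intros HA Ha.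
  assert (HAA : 0 < A * A) by (apply Rsqr_pos_lt in HA; exact HA).
  assert (Hlim : is_lim_seq (fun m => a m * A) (A * A))
    by (apply is_lim_seq_mult'; [exact Ha | apply is_lim_seq_const]).
  apply is_lim_seq_spec in Hlim.
  destruct (Hlim (mkposreal _ HAA)) as [N HN]. exists N. intros m Hm.
  specialize (HN m Hm). simpl in HN. apply Rabs_def2 in HN. lra.
Qed.

Lemma is_series_telescope (f : nat -> R) (l : R) : is_lim_seq f l ->
  is_series (fun m => f (S m) - f m) (l - f O).
Proof.
  intro Hf.
  enough (Hsum : is_lim_seq (sum_n (fun m => f (S m) - f m)) (l - f O)) by exact Hsum.
  apply (is_lim_seq_ext (fun N => f (S N) - f O)).
  - intro N. induction N as [|N IH].
    + now rewrite sum_O.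
    + rewrite sum_Sn, <- IH. change (plus _ _) with (f (S N) - f O + (f (S (S N)) - f (S N))).
      ring.
  - apply is_lim_seq_minus'; [|apply is_lim_seq_const].
    exact (proj1 (is_lim_seq_incr_1 f l) Hf).
Qed.

Lemma ex_series_plus_nonneg_l (s t : nat -> R) N :
  (forall m, (N <= m)%nat -> 0 <= s m) -> (forall m, (N <= m)%nat -> 0 <= t m) ->
  ex_series (fun m => s m + t m) -> ex_series s.
Proof.
  intros Hs Ht Hst. apply (ex_series_incr_n s N).
  apply (@ex_series_le R_AbsRing R_CompleteNormedModule _
           (fun k => s (N + k)%nat + t (N + k)%nat)).
  - intro k. change (norm (s (N + k)%nat)) with (Rabs (s (N + k)%nat)).
    pose proof (Hs (N + k)%nat ltac:(lia)). pose proof (Ht (N + k)%nat ltac:(lia)).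
    rewrite Rabs_pos_eq; lra.
  - exact (proj1 (ex_series_incr_n (fun m => s m + t m) N) Hst).
Qed.

Lemma Rabs_sqr_diff_neq0 p q :
  Rabs (p ^ 2 - q ^ 2) <> 0 -> p + q <> 0 /\ p - q <> 0.
Proof.
  replace (p ^ 2 - q ^ 2) with ((p + q) * (p - q)) by ring.
  intro H. split; intro E; apply H; rewrite E; [rewrite Rmult_0_l | rewrite Rmult_0_r];
    apply Rabs_R0.
Qed.

Section MomentumPair.

Variable beta : R.
Hypothesis Hbeta : 0 <= beta < 1.

Definition momentum_term (c : nat -> R) (m : nat) : R :=
  / (1 - beta) * (rfun (c (S (S m)) / c (S m)) + beta * rfun (c (S m) / c (S (S m)))).

Lemma momentum_term_ge0 (c : nat -> R) C : C <> 0 -> is_lim_seq c C ->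
  exists N, forall m, (N <= m)%nat -> 0 <= momentum_term c m.
Proof.
  intros HC Hc. destruct (is_lim_seq_eventually_same_sign c C HC Hc) as [N HN].
  exists N. intros m Hm.
  assert (H1 : 0 < c (S m) * C) by (apply HN; lia).
  assert (H2 : 0 < c (S (S m)) * C) by (apply HN; lia).
  assert (Hr1 := rfun_ge0 _ (Rdiv_pos_same_sign _ _ _ H2 H1)).
  assert (Hr2 := rfun_ge0 _ (Rdiv_pos_same_sign _ _ _ H1 H2)).
  assert (Hbr2 := Rmult_le_pos _ _ (proj1 Hbeta) Hr2).
  unfold momentum_term. apply Rmult_le_pos.
  - left. apply Rinv_0_lt_compat. lra.
  - lra.
Qed.

Variables a b g : nat -> R.
Hypothesis Ha0 : forall k, a k <> 0.
Hypothesis Hb0 : forall k, b k <> 0.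
Hypothesis Ha_step : forall m,
  a (S (S m)) = a (S m) - g m * a (S m) + beta * (a (S m) - a m).
Hypothesis Hb_step : forall m,
  b (S (S m)) = b (S m) + g m * b (S m) + beta * (b (S m) - b m).

Definition momentum_potential (m : nat) : R :=
  beta / (1 - beta) * (a m / a (S m) + b m / b (S m))
  - ln (Rabs (a (S m))) - ln (Rabs (b (S m))).

Lemma momentum_ratio_a m : a (S (S m)) / a (S m) = 1 - g m + beta - beta * (a m / a (S m)).
Proof. rewrite Ha_step. field. apply Ha0. Qed.

Lemma momentum_ratio_b m : b (S (S m)) / b (S m) = 1 + g m + beta - beta * (b m / b (S m)).
Proof. rewrite Hb_step. field. apply Hb0. Qed.

Lemma momentum_terms_telescope m :
  momentum_term a m + momentum_term b m
  = momentum_potential (S m) - momentum_potential m.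
Proof.
  unfold momentum_term, momentum_potential, rfun.
  rewrite !ln_Rabs_div by (apply Ha0 || apply Hb0).
  rewrite momentum_ratio_a, momentum_ratio_b.
  field. repeat split; (apply Ha0 || apply Hb0 || lra).
Qed.

Variables (A B : R).
Hypothesis HA : A <> 0.
Hypothesis HB : B <> 0.
Hypothesis Ha_lim : is_lim_seq a A.
Hypothesis Hb_lim : is_lim_seq b B.

Lemma is_lim_seq_momentum_potential :
  is_lim_seq momentum_potential
    (beta / (1 - beta) * (A / A + B / B) - ln (Rabs A) - ln (Rabs B)).
Proof.
  pose proof (proj1 (is_lim_seq_incr_1 a A) Ha_lim) as Ha1.
  pose proof (proj1 (is_lim_seq_incr_1 b B) Hb_lim) as Hb1.
  unfold momentum_potential.
  repeat apply is_lim_seq_minus'.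
  - apply is_lim_seq_mult'; [apply is_lim_seq_const|].
    apply is_lim_seq_plus'; apply is_lim_seq_div'; assumption.
  - apply is_lim_seq_ln_Rabs; assumption.
  - apply is_lim_seq_ln_Rabs; assumption.
Qed.

Lemma ex_series_momentum_terms :
  ex_series (momentum_term a) /\ ex_series (momentum_term b).
Proof.
  assert (Hsum : ex_series (fun m => momentum_term a m + momentum_term b m)).
  { eexists. eapply is_series_ext.
    - intro m. symmetry. apply momentum_terms_telescope.
    - apply is_series_telescope, is_lim_seq_momentum_potential. }
  destruct (momentum_term_ge0 a A HA Ha_lim) as [Na Hta].
  destruct (momentum_term_ge0 b B HB Hb_lim) as [Nb Htb].
  assert (Hta' : forall m, (Na + Nb <= m)%nat -> 0 <= momentum_term a m)
    by (intros m Hm; apply Hta; lia).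
  assert (Htb' : forall m, (Na + Nb <= m)%nat -> 0 <= momentum_term b m)
    by (intros m Hm; apply Htb; lia).
  split.
  - exact (ex_series_plus_nonneg_l _ _ _ Hta' Htb' Hsum).
  - apply (ex_series_plus_nonneg_l _ _ _ Htb' Hta').
    apply (ex_series_ext _ _ (fun m => Rplus_comm _ _) Hsum).
Qed.

End MomentumPair.

Theorem lemma2
  (n d B : nat) (x : nat -> vec) (y : nat -> R)
  (gamma beta : R) (Bs : nat -> list nat)
  (u v : nat -> vec) (uinf vinf : vec) :
  0 < gamma -> 0 <= beta < 1 ->
  (1 <= B <= n)%nat ->
  (* batches B_k (k >= 1) of size B drawn from [n] = {0,..,n-1} *)
  (forall k, length (Bs k) = B /\ List.Forall (fun i => (i < n)%nat) (Bs k)) ->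
  (* initialisation u_1 = u_0, v_1 = v_0 *)
  (forall j, u 1%nat j = u 0%nat j) ->
  (forall j, v 1%nat j = v 0%nat j) ->
  (* stochastic momentum GD, theta_k = u_k (.) v_k *)
  (forall k j, (1 <= k)%nat ->
     u (S k) j = u k j
       - gamma * batch_grad d x y (Bs k) (fun l => u k l * v k l) j * v k j
       + beta * (u k j - u (k - 1)%nat j)) ->
  (forall k j, (1 <= k)%nat ->
     v (S k) j = v k j
       - gamma * batch_grad d x y (Bs k) (fun l => u k l * v k l) j * u k j
       + beta * (v k j - v (k - 1)%nat j)) ->
  (* convergence of the iterates *)
  (forall j, (j < d)%nat -> is_lim_seq (fun k => u k j) (uinf j)) ->
  (forall j, (j < d)%nat -> is_lim_seq (fun k => v k j) (vinf j)) ->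
  (* Delta_inf has nonzero coordinates *)
  (forall j, (j < d)%nat -> Rabs (uinf j ^ 2 - vinf j ^ 2) <> 0) ->
  (* no coordinate of w_{+,k} = u_k + v_k, w_{-,k} = u_k - v_k is ever zero *)
  (forall k j, (j < d)%nat -> u k j + v k j <> 0 /\ u k j - v k j <> 0) ->
  (* S_+ and S_- converge (coordinatewise) to finite values *)
  forall j, (j < d)%nat ->
    (exists Sp : R, is_series (fun m =>
       let k := S m in
       / (1 - beta) *
       (rfun ((u (S k) j + v (S k) j) / (u k j + v k j))
        + beta * rfun ((u k j + v k j) / (u (S k) j + v (S k) j)))) Sp)
    /\
    (exists Sm : R, is_series (fun m =>
       let k := S m in
       / (1 - beta) *
       (rfun ((u (S k) j - v (S k) j) / (u k j - v k j))
        + beta * rfun ((u k j - v k j) / (u (S k) j - v (S k) j)))) Sm).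
Proof.
  intros _ Hbeta _ _ _ _ Hu Hv Hu_lim Hv_lim HD Hw j Hj.
  set (g := fun m => gamma * batch_grad d x y (Bs (S m)) (fun l => u (S m) l * v (S m) l) j).
  set (wp := fun k => u k j + v k j).
  set (wm := fun k => u k j - v k j).
  assert (Hwp_step : forall m,
    wp (S (S m)) = wp (S m) - g m * wp (S m) + beta * (wp (S m) - wp m)).
  { intro m. unfold wp, g. rewrite (Hu (S m) j), (Hv (S m) j) by lia.
    replace (S m - 1)%nat with m by lia. ring. }
  assert (Hwm_step : forall m,
    wm (S (S m)) = wm (S m) + g m * wm (S m) + beta * (wm (S m) - wm m)).
  { intro m. unfold wm, g. rewrite (Hu (S m) j), (Hv (S m) j) by lia.
    replace (S m - 1)%nat with m by lia. ring. }
  destruct (Rabs_sqr_diff_neq0 _ _ (HD j Hj)) as [HAp HAm].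
  destruct (ex_series_momentum_terms beta Hbeta wp wm g
              (fun k => proj1 (Hw k j Hj)) (fun k => proj2 (Hw k j Hj))
              Hwp_step Hwm_step _ _ HAp HAm
              (is_lim_seq_plus' _ _ _ _ (Hu_lim j Hj) (Hv_lim j Hj))
              (is_lim_seq_minus' _ _ _ _ (Hu_lim j Hj) (Hv_lim j Hj)))
    as [[Sp HSp] [Sm HSm]].
  split; [exists Sp | exists Sm]; assumption.
Qed.
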